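(* (1) $M=\bigoplus_{d\in \mathbb{N}} G_d$, where $G_d$ is the set of permutations of $\mathcal{X}_d$ which commute with $\mathrm{Gal}(\mathbb{F}_{q^d}:\mathbb{F}_q)$. (2) $G_d\cong \mathbb{Z}/d\mathbb{Z} \wr \mathrm{Perm}(r_d)$, where $r_d$ is the number of orbits of size $d$ (i.e. $r_d=d^{-1}\#\mathcal{X}_d$). (3) Equivalently, $G_d\cong (\mathbb{Z}/d\mathbb{Z})^{r_d}\rtimes_h \mathrm{Perm}(r_d)$, where $h:\mathrm{Perm}(r_d)\to \mathrm{Aut}((\mathbb{Z}/d\mathbb{Z})^{r_d})$ is given by $h(\sigma)(a_1,\dots,a_{r_d})=(a_{(1)^\sigma},\dots,a_{(r_d)^\sigma})$.
   Context: $M$ denotes the set of permutations of $\overline{\mathbb{F}}_q^n$ induced by profinite polynomial endomorphisms over $\mathbb{F}_q$; equivalently, $M$ is the set of permutations of $\overline{\mathbb{F}}_q^n$ commuting with the coordinatewise action of $\mathrm{Gal}(\overline{\mathbb{F}}_q:\mathbb{F}_q)$. $\mathcal{X}_d$ is the union of all orbits of size $d$ of $\mathrm{Gal}(\overline{\mathbb{F}}_q:\mathbb{F}_q)$ acting on $\overline{\mathbb{F}}_q^n$. Permutations act on the right: $(x)^{\sigma\rho}=((x)^\sigma)^\rho$. *)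

From HB Require Import structures.
From mathcomp Require Import all_boot all_order all_algebra all_fingroup.
Set Implicit Arguments. Unset Strict Implicit. Unset Printing Implicit Defensive.
Import GRing.Theory.
Local Open Scope ring_scope.

Definition has_card (T : eqType) (A : T -> Prop) (N : nat) : Prop :=
  exists s : seq T, size s = N /\ uniq s /\ (forall x, A x <-> x \in s).

(* Setting: F = F_q (any finite field), K = an algebraic closure of F
   (algebraically closed field, algebraic over the image of iota : F -> K). *)
Section Setting.
Variables (F : finFieldType) (K : closedFieldType) (iota : {rmorphism F -> K}).
Variable n : nat.

Definition isGal (g : K -> K) : Prop :=
  [/\ bijective g, (forall x y, g (x + y) = g x + g y),
      (forall x y, g (x * y) = g x * g y), g 1 = 1
    & (forall a, g (iota a) = iota a)].

Definition gact (g : K -> K) (x : 'rV[K]_n) : 'rV[K]_n := map_mx g x.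

Definition in_orbit (x y : 'rV[K]_n) : Prop :=
  exists g, isGal g /\ y = gact g x.

Definition inX (d : nat) (x : 'rV[K]_n) : Prop := has_card (in_orbit x) d.

Definition Mperm :=
  {s : 'rV[K]_n -> 'rV[K]_n |
     bijective s /\ forall g, isGal g -> forall x, s (gact g x) = gact g (s x)}.

Definition Xd (d : nat) := {x : 'rV[K]_n | inX d x}.

Definition Gd (d : nat) :=
  {f : Xd d -> Xd d |
     bijective f /\ forall g, isGal g -> forall x y : Xd d,
        sval y = gact g (sval x) -> sval (f y) = gact g (sval (f x))}.

End Setting.
Arguments inX [F K] iota n d x.
Arguments in_orbit [F K] iota n x y.

(* Permutations act on the right: h = "first f, then g". *)
Definition Gd_comp F K iota n d (f g h : @Gd F K iota n d) : Prop :=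
  forall x, sval h x = sval g (sval f x).

(* Z/dZ, for d >= 1 *)
Definition Zmod (d : nat) := 'I_(d.-1).+1.

(* Wreath product A wr Perm(r) = A^r x| Perm(r), Perm(r) permuting the
   coordinates; MathComp permutations compose on the right ((s*t) i = t (s i)). *)
Definition wreath_mul (A : zmodType) (r : nat)
  (u v : {ffun 'I_r -> A} * {perm 'I_r}) : {ffun 'I_r -> A} * {perm 'I_r} :=
  ([ffun i => u.1 i + v.1 (u.2 i)], (u.2 * v.2)%g).

Definition sdp_mul (A : zmodType) (r : nat)
  (h : {perm 'I_r} -> {ffun 'I_r -> A} -> {ffun 'I_r -> A})
  (u v : {ffun 'I_r -> A} * {perm 'I_r}) : {ffun 'I_r -> A} * {perm 'I_r} :=
  (u.1 + h u.2 v.1, (u.2 * v.2)%g).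

Definition hperm (A : zmodType) (r : nat) (s : {perm 'I_r})
  (a : {ffun 'I_r -> A}) : {ffun 'I_r -> A} := [ffun i => a (s i)].

Definition is_iso (G W : Type) (relmul : G -> G -> G -> Prop)
  (mulW : W -> W -> W) (Psi : G -> W) : Prop :=
  bijective Psi /\ forall f g h, relmul f g h -> Psi h = mulW (Psi f) (Psi g).

(* The Frobenius [frob k y = y ^+ (q ^ k)], q = #|F|, controls the whole Galois
   action: on the subfield fixed by [frob m], which is 0 together with the cyclic
   group of (q^m - 1)-th roots of unity, every automorphism g over F sends a
   generator to one of its Frobenius conjugates (the roots of a polynomial with
   coefficients in F), so g agrees there with some power of the Frobenius. Hence
   Galois orbits in K^n are Frobenius orbits, and x lies in X_d iff its Frobenius
   period is d. An equivariant permutation preserves periods, so it is the same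
   thing as a family of equivariant permutations of the X_d. The set X_d is finite
   (its coordinates are roots of X^(q^d) - X); fixing a representative of each of
   its r_d orbits, every point is [frob k] of the i-th representative for a unique
   (i, k mod d). An equivariant permutation of X_d is determined by the images of
   the representatives, i.e. by a permutation of the orbits and a shift in Z/dZ
   for each of them, and composing permutations multiplies these data as in the
   wreath product. *)

From Pilot Require Import Defs.
From Stdlib Require Import ProofIrrelevance FunctionalExtensionality ClassicalEpsilon.
From HB Require Import structures.
From mathcomp Require Import all_boot all_order all_algebra all_fingroup.
From mathcomp Require Import cyclic finfield separable cyclotomic.
Set Implicit Arguments. Unset Strict Implicit. Unset Printing Implicit Defensive.
Import GRing.Theory.
Local Open Scope ring_scope.

Lemma sval_inj (A : Type) (P : A -> Prop) : injective (@sval A P).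
Proof. exact: eq_sig_hprop (fun _ => proof_irrelevance _). Qed.

Lemma has_card_inj (T : eqType) (A : T -> Prop) N N' :
  has_card A N -> has_card A N' -> N = N'.
Proof.
move=> [s [<- [us As]]] [s' [<- [us' As']]].
apply: perm_size; apply: uniq_perm => // z.
by apply/idP/idP => h; [apply/As'/As | apply/As/As'].
Qed.

Lemma perm_map_iota_succ (T : eqType) (h : nat -> T) m : h m = h 0%N ->
  perm_eq [seq h k.+1 | k <- iota 0 m] [seq h k | k <- iota 0 m].
Proof.
case: m => [//|m] hm.
suff -> : [seq h k.+1 | k <- iota 0 m.+1] = rot 1 [seq h k | k <- iota 0 m.+1].
  by rewrite perm_rot.
rewrite /= rot1_cons -hm -[m.+1]add1n {hm}.
elim: m 1%N => [|m IHm] i; first by rewrite addn0.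
by rewrite /= IHm addnS addSn.
Qed.

Section Frobenius.
Variables (F : finFieldType) (K : closedFieldType) (iota : {rmorphism F -> K}).

Definition frob (k : nat) (y : K) : K := y ^+ (#|F| ^ k).

Lemma card_gt1 : (1 < #|F|)%N. Proof. exact: finNzRing_gt1. Qed.

Lemma pchar_nat_card : [pchar K].-nat #|F|.
Proof.
have [p p_pr pcF] := finPcharP F.
have -> : #|F| = (p ^ logn p #|F|)%N by exact: card_pprimeChar pcF.
by rewrite pnatX (eq_pnat _ (pcharf_eq (rmorph_pchar iota pcF))) pnat_id.
Qed.

Lemma natr_card : (#|F|%:R : K) = 0.
Proof.
have pdiv_pchar : pdiv #|F| \in [pchar K].
  by apply: pnatPpi pchar_nat_card _; rewrite pi_pdiv card_gt1.
by apply/eqP; rewrite -(dvdn_pcharf pdiv_pchar) pdiv_dvd.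
Qed.

Lemma frob_is_nmod_morphism k : nmod_morphism (frob k).
Proof.
split; first by rewrite /frob expr0n expn_eq0 gtn_eqF ?(ltnW card_gt1).
by move=> x y; rewrite /frob exprDn_pchar // pnatX pchar_nat_card.
Qed.

Lemma frob_is_monoid_morphism k : monoid_morphism (frob k).
Proof. by split=> [|x y]; rewrite /frob (expr1n, exprMn). Qed.

HB.instance Definition _ k :=
  GRing.isNmodMorphism.Build K K (frob k) (frob_is_nmod_morphism k).
HB.instance Definition _ k :=
  GRing.isMonoidMorphism.Build K K (frob k) (frob_is_monoid_morphism k).

Lemma frob0 y : frob 0 y = y.
Proof. by rewrite /frob expn0 expr1. Qed.

Lemma frobD j k y : frob (j + k) y = frob j (frob k y).
Proof. by rewrite /frob -exprM expnD mulnC. Qed.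

Lemma frob_iota k a : frob k (iota a) = iota a.
Proof.
rewrite /frob -rmorphXn; congr (iota _).
by elim: k => [|k IHk]; rewrite ?expr1 // expnSr exprM IHk expf_card.
Qed.

Lemma frob_inj k : injective (frob k). Proof. exact: fmorph_inj. Qed.

Lemma frob_surj k y : exists x, frob k x = y.
Proof.
have /closed_rootP[x] : size ('X^(#|F| ^ k) - y%:P : {poly K}) != 1%N.
  by rewrite size_XnsubC ?expn_gt0 ?(ltnW card_gt1) // eqSS expn_eq0 gtn_eqF ?(ltnW card_gt1).
by rewrite rootE !hornerE subr_eq0 => /eqP; exists x.
Qed.

Lemma frob_isGal k : isGal iota (frob k).
Proof.
split; [|exact: rmorphD|exact: rmorphM|exact: rmorph1|exact: frob_iota].
pose frobV y := sval (sig_eqW (frob_surj k y)).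
have frobK : cancel frobV (frob k) by move=> y; rewrite /frobV; case: sig_eqW.
exists frobV => // y.
by apply: (@frob_inj k); rewrite frobK.
Qed.

Lemma frob1_fixed c : frob 1 c = c -> exists a, c = iota a.
Proof.
rewrite /frob expn1 => c_fixed.
case c_iota: (c \in [seq iota a | a <- enum F]); first by case/mapP: c_iota => a; exists a.
pose p : {poly K} := 'X^#|F| - 'X.
have size_p : size p = (#|F|).+1.
  by rewrite size_polyDl ?size_polyXn // size_polyN size_polyX ltnS card_gt1.
have p_neq0 : p != 0 by rewrite -size_poly_eq0 size_p.
have roots_p : all (root p) (c :: [seq iota a | a <- enum F]).
  apply/allP => z; rewrite inE => /orP[/eqP->|/mapP[a _ ->]].
    by rewrite /root !hornerE c_fixed subrr.
  by rewrite /root !hornerE -rmorphXn expf_card subrr.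
have uniq_roots : uniq (c :: [seq iota a | a <- enum F]).
  by rewrite /= c_iota map_inj_uniq ?enum_uniq //; exact: fmorph_inj.
by have := max_poly_roots p_neq0 roots_p uniq_roots; rewrite size_p /= size_map -cardE ltnn.
Qed.

Lemma natr_pred_card_expn_neq0 m : (0 < m)%N -> ((#|F| ^ m).-1%:R : K) != 0.
Proof.
move=> m_gt0; have q_gt0 : (1 <= #|F| ^ m)%N by rewrite expn_gt0 (ltnW card_gt1).
by rewrite -subn1 natrB // natrX natr_card expr0n eqn0Ngt m_gt0 sub0r oppr_eq0 oner_eq0.
Qed.

Lemma frob_fixed_cyclic m : (0 < m)%N -> exists2 al : K, frob m al = al &
  forall y, frob m y = y -> y = 0 \/ exists i, y = al ^+ i.
Proof.
move=> m_gt0; set N := (#|F| ^ m).-1.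
have q_gt1 : (1 < #|F| ^ m)%N by rewrite -(exp1n m) ltn_exp2r // card_gt1.
have N_gt0 : (0 < N)%N by rewrite -ltnS prednK // ltnW.
have frob_unity y : (frob m y == y) = (y * y ^+ N == y).
  by rewrite -exprS prednK // ltnW.
have [rs def_rs] := closed_field_poly_normal ('X^N - 1 : {poly K}).
rewrite (monicP (monicXnsubC 1 N_gt0)) scale1r in def_rs.
have size_rs : size rs = N.
  by have := size_prod_XsubC rs id; rewrite -def_rs size_XnsubC // => -[].
have uniq_rs : uniq rs.
  rewrite -separable_prod_XsubC -def_rs separable_Xn_sub_1 //.
  exact: natr_pred_card_expn_neq0.
have unity_rs : all N.-unity_root rs.
  by apply/allP => z z_rs; rewrite /root_of_unity /= def_rs root_prod_XsubC.
have [al _ al_prim] := hasP (has_prim_root N_gt0 unity_rs uniq_rs (eq_leq (esym size_rs))).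
exists al; first by apply/eqP; rewrite frob_unity (prim_expr_order al_prim) mulr1.
move=> y /eqP; rewrite frob_unity; have [-> _|y_neq0] := eqVneq y 0; first by left.
rewrite -[X in _ == X]mulr1 (inj_eq (mulfI y_neq0)) => /eqP yN.
by right; have [i ->] := prim_rootP al_prim yN; exists i.
Qed.

Section GaloisAutomorphism.
Variable g : K -> K.
Hypothesis g_gal : isGal iota g.

Lemma gal_is_nmod_morphism : nmod_morphism g.
Proof.
case: g_gal => _ gD _ _ _; split=> //.
by apply: (addrI (g 0)); rewrite -gD !addr0.
Qed.

Lemma gal_is_monoid_morphism : monoid_morphism g.
Proof. by case: g_gal. Qed.

HB.instance Definition _ := GRing.isNmodMorphism.Build K K g gal_is_nmod_morphism.
HB.instance Definition _ := GRing.isMonoidMorphism.Build K K g gal_is_monoid_morphism.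

Lemma gal_frob_fixed_root m (al : K) : (0 < m)%N -> frob m al = al ->
  exists j, g al = frob j al.
Proof.
move=> m_gt0 al_fixed.
(* The Frobenius conjugates of [al] permute the roots of [P], so the
   coefficients of [P] are fixed by [frob 1], lie in [iota F], and are fixed by [g]. *)
pose P := \prod_(z <- [seq frob k al | k <- seq.iota 0 m]) ('X - z%:P).
have P_frob1 : map_poly (frob 1) P = P.
  rewrite /P map_prod_XsubC big_map.
  rewrite -(big_map (fun k => frob 1 (frob k al)) predT (fun z => 'X - z%:P)).
  apply/perm_big; rewrite (eq_map (fun k => esym (frobD 1 k al))).
  by apply: perm_map_iota_succ; rewrite frob0.
have P_gal : map_poly g P = P.
  apply/polyP => i; rewrite coef_map.
  have /frob1_fixed[a ->] : frob 1 P`_i = P`_i by rewrite -{2}P_frob1 coef_map.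
  by case: g_gal.
have : root P (g al).
  rewrite -P_gal /root horner_map; apply/eqP; rewrite (rootP _) ?rmorph0 //.
  rewrite root_prod_XsubC; apply/mapP; exists 0%N; last by rewrite frob0.
  by rewrite mem_iota.
by rewrite root_prod_XsubC => /mapP[j _ ->]; exists j.
Qed.

Lemma gal_eq_frob_on_fixed m : (0 < m)%N ->
  exists j, forall y, frob m y = y -> g y = frob j y.
Proof.
move=> m_gt0; have [al al_fixed al_gen] := frob_fixed_cyclic m_gt0.
have [j gal_al] := gal_frob_fixed_root m_gt0 al_fixed.
exists j => y /al_gen[->|[i ->]]; first by rewrite !rmorph0.
by rewrite !rmorphXn; congr (_ ^+ _).
Qed.

End GaloisAutomorphism.

Lemma frob_fixed_mul m c y : frob m y = y -> frob (m * c) y = y.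
Proof.
move=> y_fixed; elim: c => [|c IHc]; first by rewrite muln0 frob0.
by rewrite mulnS frobD IHc y_fixed.
Qed.

Hypothesis algK : forall x : K, exists p : {poly F}, p != 0 /\ root (map_poly iota p) x.

Lemma frob_fixed_exists y : exists2 m, (0 < m)%N & frob m y = y.
Proof.
(* All conjugates [frob k y] are roots of the same nonzero polynomial, so two of them coincide. *)
have [p [p_neq0 p_y]] := algK y; set P := map_poly iota p.
have P_neq0 : P != 0 by rewrite map_poly_eq0.
have P_frob k : root P (frob k y).
  by have := rmorph_root (frob k) p_y; rewrite -map_poly_comp (eq_map_poly (frob_iota k)).
pose s := [seq frob k y | k <- seq.iota 0 (size P)].
have /(uniqPn 0)[i [j [lt_ij]]] : ~~ uniq s.
  apply/negP => uniq_s.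
  have roots_s : all (root P) s by apply/allP => z /mapP[k _ ->].
  by have := max_poly_roots P_neq0 roots_s uniq_s; rewrite size_map size_iota ltnn.
rewrite size_map size_iota => j_lt.
rewrite !(nth_map 0%N) ?nth_iota ?size_iota ?(ltn_trans lt_ij) // !add0n => frob_ij.
exists (j - i)%N; first by rewrite subn_gt0.
by apply: (@frob_inj i); rewrite -frobD subnKC ?(ltnW lt_ij).
Qed.

Lemma frob_fixed_seq (s : seq K) :
  exists2 m, (0 < m)%N & forall y, y \in s -> frob m y = y.
Proof.
elim: s => [|y s [m m_gt0 s_fixed]]; first by exists 1%N.
have [m' m'_gt0 y_fixed] := frob_fixed_exists y.
exists (m * m')%N => [|z]; first by rewrite muln_gt0 m_gt0.
rewrite inE => /orP[/eqP->|z_s]; first by rewrite mulnC frob_fixed_mul.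
by rewrite frob_fixed_mul // s_fixed.
Qed.

Variable n : nat.
Implicit Types (x y : 'rV[K]_n) (d k m : nat).

Definition frobv k x : 'rV[K]_n := Defs.gact (frob k) x.

Lemma frobvD j k x : frobv (j + k) x = frobv j (frobv k x).
Proof. by apply/matrixP => a b; rewrite !mxE frobD. Qed.

Lemma frobv0 x : frobv 0 x = x.
Proof. by apply/matrixP => a b; rewrite !mxE frob0. Qed.

Lemma frobv_inj k : injective (frobv k).
Proof.
move=> x y /matrixP xy; apply/matrixP => a b.
by have := xy a b; rewrite !mxE => /frob_inj.
Qed.

Lemma frobv_fixed m x : frobv m x = x <-> forall a b, frob m (x a b) = x a b.
Proof.
split=> [/matrixP x_fixed a b|x_fixed]; first by have := x_fixed a b; rewrite mxE.
by apply/matrixP => a b; rewrite mxE x_fixed.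
Qed.

Lemma gal_eq_frobv_on_fixed g d : isGal iota g -> (0 < d)%N ->
  exists j, forall x, frobv d x = x -> Defs.gact g x = frobv j x.
Proof.
move=> g_gal d_gt0; have [j gj] := gal_eq_frob_on_fixed g_gal d_gt0.
by exists j => x /frobv_fixed x_fixed; apply/matrixP => a b; rewrite !mxE gj.
Qed.

Lemma frobv_fixed_exists x : exists m, (0 < m)%N && (frobv m x == x).
Proof.
have [m m_gt0 x_fixed] := frob_fixed_seq [seq x ord0 b | b <- enum 'I_n].
exists m; rewrite m_gt0; apply/eqP/frobv_fixed => a b.
by rewrite (ord1 a); apply/x_fixed/map_f; rewrite mem_enum.
Qed.

Definition period x := ex_minn (frobv_fixed_exists x).

Lemma period_gt0 x : (0 < period x)%N.
Proof. by rewrite /period; case: ex_minnP => m /andP[]. Qed.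

Lemma frobv_period x : frobv (period x) x = x.
Proof. by rewrite /period; case: ex_minnP => m /andP[_ /eqP]. Qed.

Lemma period_min x m : (0 < m)%N -> frobv m x = x -> (period x <= m)%N.
Proof.
by move=> m_gt0 x_fixed; rewrite /period; case: ex_minnP => k _; apply; rewrite m_gt0 x_fixed eqxx.
Qed.

Lemma frobv_mod x k : frobv k x = frobv (k %% period x) x.
Proof.
rewrite {1}(divn_eq k (period x)) addnC frobvD; congr (frobv _ _).
by elim: (k %/ period x)%N => [|c IHc]; rewrite ?frobv0 // mulSn frobvD IHc frobv_period.
Qed.

Lemma frobv_period_inj x i j : (i < period x)%N -> (j < period x)%N ->
  frobv i x = frobv j x -> i = j.
Proof.
wlog le_ij : i j / (i <= j)%N.
  move=> wlog_ij ix jx eq_ij; case: (leqP i j) => [le_ij|/ltnW le_ji].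
    exact: wlog_ij.
  exact/esym/wlog_ij.
move=> _ jx eq_ij; apply/eqP; rewrite eqn_leq le_ij leqNgt; apply/negP => lt_ij.
have x_fixed : frobv (j - i) x = x by apply: (@frobv_inj i); rewrite -frobvD subnKC.
have ji_gt0 : (0 < j - i)%N by rewrite subn_gt0.
by have := leq_trans (period_min ji_gt0 x_fixed) (leq_subr i j); rewrite leqNgt jx.
Qed.

Lemma in_orbitP x y : Defs.in_orbit iota n x y <-> exists k, y = frobv k x.
Proof.
split=> [[g [g_gal ->]]|[k ->]]; last by exists (frob k); split=> //; exact: frob_isGal.
have [j gj] := gal_eq_frobv_on_fixed g_gal (period_gt0 x).
by exists j; apply/gj/frobv_period.
Qed.

Definition orbit_seq x := [seq frobv k x | k <- seq.iota 0 (period x)].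

Lemma orbit_seq_uniq x : uniq (orbit_seq x).
Proof.
rewrite map_inj_in_uniq ?iota_uniq // => i j; rewrite !mem_iota !add0n.
exact: frobv_period_inj.
Qed.

Lemma mem_orbit_seq x y : y \in orbit_seq x <-> exists k, y = frobv k x.
Proof.
split=> [/mapP[k _ ->]|[k ->]]; first by exists k.
by rewrite frobv_mod; apply: map_f; rewrite mem_iota ltn_pmod ?period_gt0.
Qed.

Lemma orbit_seq_self x : x \in orbit_seq x.
Proof. by apply/mem_orbit_seq; exists 0%N; rewrite frobv0. Qed.

Lemma has_card_orbit x : has_card (Defs.in_orbit iota n x) (period x).
Proof.
exists (orbit_seq x); split; first by rewrite size_map size_iota.
split=> [|y]; first exact: orbit_seq_uniq.
by rewrite in_orbitP mem_orbit_seq.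
Qed.

Lemma inX_period d x : inX iota n d x <-> period x = d.
Proof. by split=> [/(has_card_inj (has_card_orbit x))|<-] //; exact: has_card_orbit. Qed.

Definition frobv_commuting (f : 'rV[K]_n -> 'rV[K]_n) :=
  forall k x, f (frobv k x) = frobv k (f x).

Lemma period_comm f x : injective f -> frobv_commuting f -> period (f x) = period x.
Proof. by move=> f_inj f_comm; apply: eq_ex_minn => m; rewrite -f_comm (inj_eq f_inj). Qed.

Lemma period_frobv j x : period (frobv j x) = period x.
Proof. by apply: period_comm => [|k z]; [exact: frobv_inj | rewrite -!frobvD addnC]. Qed.

Lemma period_gal g x : isGal iota g -> period (Defs.gact g x) = period x.
Proof.
move=> g_gal; have [k ->] : exists k, Defs.gact g x = frobv k x.
  by apply/in_orbitP; exists g.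
exact: period_frobv.
Qed.

Lemma inX_comm f d x : injective f -> frobv_commuting f ->
  inX iota n d x -> inX iota n d (f x).
Proof. by move=> f_inj f_comm /inX_period x_d; apply/inX_period; rewrite period_comm. Qed.

Definition restrX d f (f_inj : injective f) (f_comm : frobv_commuting f)
  (y : Xd iota n d) : Xd iota n d :=
  exist _ (f (sval y)) (inX_comm f_inj f_comm (svalP y)).
Arguments restrX d [f].


Lemma Mperm_inj (s : Mperm iota n) : injective (sval s).
Proof. exact: bij_inj (proj1 (svalP s)). Qed.

Lemma Mperm_comm (s : Mperm iota n) : frobv_commuting (sval s).
Proof. by move=> k x; apply/(proj2 (svalP s))/frob_isGal. Qed.

Definition restrM_fun (s : Mperm iota n) d := restrX d (@Mperm_inj s) (Mperm_comm s).
Arguments restrM_fun : clear implicits.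

Lemma restrM_fun_isGd (s : Mperm iota n) d :
  bijective (restrM_fun s d) /\ forall g, isGal iota g -> forall x y : Xd iota n d,
    sval y = Defs.gact g (sval x) ->
    sval (restrM_fun s d y) = Defs.gact g (sval (restrM_fun s d x)).
Proof.
split; last by move=> g g_gal x y /= ->; exact: (proj2 (svalP s)).
have [t sK tK] := proj1 (svalP s).
have t_comm : frobv_commuting t.
  by move=> k x; apply: (@Mperm_inj s); rewrite tK Mperm_comm tK.
exists (restrX d (can_inj tK) t_comm) => y; apply: sval_inj; [exact: sK | exact: tK].
Qed.

Definition restrM (s : Mperm iota n) d : Gd iota n d :=
  exist _ (restrM_fun s d) (restrM_fun_isGd s d).

Lemma inX_period_self x : inX iota n (period x) x.
Proof. exact/inX_period. Qed.

Definition extendX (H : forall d, Xd iota n d -> Xd iota n d) x : 'rV[K]_n :=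
  sval (H (period x) (exist _ x (inX_period_self x))).

Lemma extendX_Xd H d (y : Xd iota n d) : extendX H (sval y) = sval (H d y).
Proof.
case: y => x x_d; have /inX_period period_x := x_d; subst d.
by rewrite /extendX; do 2 f_equal; apply: sval_inj.
Qed.

Lemma extendX_isMperm (G : forall d, Gd iota n d) :
  let f := extendX (fun d => sval (G d)) in
  bijective f /\ forall g, isGal iota g -> forall x, f (Defs.gact g x) = Defs.gact g (f x).
Proof.
split=> [|g g_gal x].
  have Ginv_ex d : exists h : Xd iota n d -> Xd iota n d,
      cancel (sval (G d)) h /\ cancel h (sval (G d)).
    by have [[h GK hK] _] := svalP (G d); exists h.
  pose Ginv d := sval (constructive_indefinite_description _ (Ginv_ex d)).
  have GinvP d : cancel (sval (G d)) (Ginv d) /\ cancel (Ginv d) (sval (G d)).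
    exact: proj2_sig (constructive_indefinite_description _ (Ginv_ex d)).
  by exists (extendX Ginv) => x; rewrite {2}/extendX extendX_Xd (proj1 (GinvP _), proj2 (GinvP _)).
have x_d : inX iota n (period x) (Defs.gact g x) by apply/inX_period; exact: period_gal.
rewrite (extendX_Xd _ (exist _ _ x_d)) /extendX.
exact: (proj2 (svalP (G (period x)))).
Qed.

Definition extendM (G : forall d, Gd iota n d) : Mperm iota n :=
  exist _ _ (extendX_isMperm G).

Lemma restrM_bij : bijective restrM.
Proof.
exists extendM => [s|G].
  by apply: sval_inj; apply: functional_extensionality.
apply: functional_extensionality_dep => d; apply: sval_inj.
by apply: functional_extensionality => y; apply: sval_inj; exact: extendX_Xd.
Qed.

Lemma frobv_fixed_finite d : (0 < d)%N ->
  exists E : seq 'rV[K]_n, forall x, frobv d x = x -> x \in E.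
Proof.
move=> d_gt0.
pose p : {poly K} := 'X^(#|F| ^ d) - 'X.
have [rs def_rs] := closed_field_poly_normal p.
have p_neq0 : p != 0.
  rewrite -size_poly_eq0 size_polyDl ?size_polyXn // size_polyN size_polyX ltnS.
  by rewrite (leq_trans card_gt1) // -{1}[#|F|]expn1 leq_pexp2l // ltnW // card_gt1.
have rs_fixed (c : K) : frob d c = c -> c \in rs.
  move=> c_fixed; rewrite -root_prod_XsubC -(@rootZ _ c (lead_coef p)) ?lead_coef_eq0 //.
  by rewrite -def_rs /root /p !hornerE -/(frob d c) c_fixed subrr.
exists [seq \row_b val (f b) | f : {ffun 'I_n -> seq_sub rs}] => x /frobv_fixed x_fixed.
have x_rs b : x ord0 b \in rs by exact: rs_fixed.
apply/mapP; exists [ffun b => SeqSub (x_rs b)]; first by rewrite mem_enum.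
by apply/matrixP => a b; rewrite (ord1 a) mxE ffunE.
Qed.

Section WreathCoordinates.
Variables (d' : nat) (E : seq 'rV[K]_n).
Hypothesis E_fixed : forall x, frobv d'.+1 x = x -> x \in E.
Local Notation d := d'.+1.

(* [choose] only depends on the extension of its predicate, so [rep] is constant on orbits. *)
Definition rep x := choose (fun y => y \in orbit_seq x) x.

Lemma rep_in_orbit x : rep x \in orbit_seq x.
Proof. exact: chooseP (orbit_seq_self x). Qed.

Lemma orbit_seq_eq x y : y \in orbit_seq x -> orbit_seq y =i orbit_seq x.
Proof.
move/mem_orbit_seq => [k ->] z; apply/idP/idP => /mem_orbit_seq[j ->]; apply/mem_orbit_seq.
  by exists (j + k)%N; rewrite frobvD.
exists (j + (period x - k %% period x))%N.
rewrite [in RHS](frobv_mod x k) -frobvD -addnA subnK.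
  by rewrite frobvD frobv_period.
by rewrite ltnW // ltn_pmod // period_gt0.
Qed.

Lemma rep_eq x y : y \in orbit_seq x -> rep y = rep x.
Proof.
move=> y_x; rewrite /rep (eq_choose (orbit_seq_eq y_x)).
by apply: choose_id => //; exact: orbit_seq_self.
Qed.

Lemma rep_frobv k x : rep (frobv k x) = rep x.
Proof. by apply: rep_eq; apply/mem_orbit_seq; exists k. Qed.

Lemma rep_idem x : rep (rep x) = rep x.
Proof. exact: rep_eq (rep_in_orbit x). Qed.

Lemma period_rep x : period (rep x) = period x.
Proof. by have /mem_orbit_seq[k ->] := rep_in_orbit x; rewrite period_frobv. Qed.

Definition reps := undup [seq rep x | x <- E & period x == d].
Definition r := size reps.
Definition nth_rep (i : 'I_r) := nth 0 reps i.

Lemma reps_uniq : uniq reps. Proof. exact: undup_uniq. Qed.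

Lemma mem_reps z : z \in reps -> period z = d /\ rep z = z.
Proof.
rewrite mem_undup => /mapP[x]; rewrite mem_filter => /andP[/eqP period_x _] ->.
by rewrite period_rep period_x rep_idem.
Qed.

Lemma rep_in_reps x : period x = d -> rep x \in reps.
Proof.
move=> period_x; rewrite mem_undup map_f // mem_filter period_x eqxx /=.
by apply: E_fixed; rewrite -period_x frobv_period.
Qed.

Lemma period_nth_rep i : period (nth_rep i) = d.
Proof. exact: (mem_reps (mem_nth 0 (ltn_ord i))).1. Qed.

Lemma rep_nth_rep i : rep (nth_rep i) = nth_rep i.
Proof. exact: (mem_reps (mem_nth 0 (ltn_ord i))).2. Qed.

Lemma period_Xd (y : Xd iota n d) : period (sval y) = d.
Proof. exact/inX_period/svalP. Qed.

Lemma frobv_Xd (y : Xd iota n d) : frobv d (sval y) = sval y.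
Proof. by rewrite -{1}(period_Xd y) frobv_period. Qed.

Lemma orbit_index_lt (y : Xd iota n d) : (index (rep (sval y)) reps < r)%N.
Proof. by rewrite index_mem rep_in_reps // period_Xd. Qed.

Definition orbit_index (y : Xd iota n d) : 'I_r := Ordinal (orbit_index_lt y).

Definition orbit_offset (y : Xd iota n d) : 'I_d :=
  inZp (index (sval y) (orbit_seq (rep (sval y)))).

Lemma inX_frobv_nth_rep i k : inX iota n d (frobv k (nth_rep i)).
Proof. by apply/inX_period; rewrite period_frobv period_nth_rep. Qed.

Definition Xd_at (i : 'I_r) (k : nat) : Xd iota n d :=
  exist _ (frobv k (nth_rep i)) (inX_frobv_nth_rep i k).

Lemma Xd_at_mod i k : Xd_at i k = Xd_at i (k %% d).
Proof. by apply: sval_inj; rewrite /= frobv_mod period_nth_rep. Qed.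

Lemma nth_orbit_seq x k : (k < period x)%N -> nth 0 (orbit_seq x) k = frobv k x.
Proof. by move=> k_lt; rewrite (nth_map 0%N) ?size_iota // nth_iota. Qed.

Lemma Xd_at_coord (y : Xd iota n d) : Xd_at (orbit_index y) (orbit_offset y) = y.
Proof.
apply: sval_inj; rewrite /= /nth_rep nth_index ?rep_in_reps ?period_Xd //.
have period_rep_y : period (rep (sval y)) = d by rewrite period_rep period_Xd.
have y_orbit : sval y \in orbit_seq (rep (sval y)).
  by rewrite (orbit_seq_eq (rep_in_orbit _)) orbit_seq_self.
rewrite -[in X in (_ %% X)%N]period_rep_y -frobv_mod -nth_orbit_seq ?nth_index //.
by rewrite -(size_iota 0 (period _)) -(size_map (frobv ^~ (rep (sval y)))) index_mem.
Qed.

Lemma orbit_index_Xd_at i k : orbit_index (Xd_at i k) = i.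
Proof.
apply: val_inj; rewrite /= rep_frobv rep_nth_rep.
exact: index_uniq (ltn_ord i) reps_uniq.
Qed.

Lemma orbit_offset_Xd_at i k : orbit_offset (Xd_at i k) = inZp k.
Proof.
have k_lt : (k %% period (nth_rep i) < period (nth_rep i))%N by rewrite ltn_pmod ?period_gt0.
apply: val_inj; rewrite /orbit_offset /= rep_frobv rep_nth_rep frobv_mod.
rewrite -nth_orbit_seq // index_uniq ?orbit_seq_uniq ?size_map ?size_iota //.
by rewrite period_nth_rep modn_mod.
Qed.

Lemma Gd_frobv (f : Gd iota n d) k (y y' : Xd iota n d) :
  sval y' = frobv k (sval y) -> sval (sval f y') = frobv k (sval (sval f y)).
Proof. by move=> y'_y; apply: (proj2 (svalP f)) => //; exact: frob_isGal. Qed.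

Lemma Gd_inj (f : Gd iota n d) : injective (sval f).
Proof. exact: bij_inj (proj1 (svalP f)). Qed.

Definition Gd_perm_fun (f : Gd iota n d) i := orbit_index (sval f (Xd_at i 0)).
Definition Gd_shift (f : Gd iota n d) i := orbit_offset (sval f (Xd_at i 0)).

Lemma Gd_Xd_at (f : Gd iota n d) i k :
  sval f (Xd_at i k) = Xd_at (Gd_perm_fun f i) (k + Gd_shift f i).
Proof.
apply: sval_inj; rewrite (@Gd_frobv f k (Xd_at i 0)) /= ?frobv0 //.
by rewrite -{1}(Xd_at_coord (sval f (Xd_at i 0))) /= frobvD.
Qed.

Lemma Gd_perm_fun_inj f : injective (Gd_perm_fun f).
Proof.
move=> i j eq_ij; have shift_lt := ltn_ord (Gd_shift f i).
have : sval f (Xd_at j 0) = sval f (Xd_at i (d - Gd_shift f i + Gd_shift f j)).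
  rewrite !Gd_Xd_at eq_ij add0n -addnA (addnC (Gd_shift f j)) addnA subnK; last exact: ltnW.
  by rewrite Xd_at_mod [in RHS]Xd_at_mod modnDl.
by move/Gd_inj/(congr1 orbit_index); rewrite !orbit_index_Xd_at.
Qed.

Definition wreath_coord (f : Gd iota n d) : {ffun 'I_r -> Zmod d} * {perm 'I_r} :=
  ([ffun i => Gd_shift f i], perm (@Gd_perm_fun_inj f)).

Lemma wreath_coord_mul f g h :
  Gd_comp f g h -> wreath_coord h = wreath_mul (wreath_coord f) (wreath_coord g).
Proof.
move=> fgh; have h_Xd_at i : sval h (Xd_at i 0) = Xd_at (Gd_perm_fun g (Gd_perm_fun f i))
    (Gd_shift f i + Gd_shift g (Gd_perm_fun f i)).
  by rewrite fgh Gd_Xd_at add0n Gd_Xd_at.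
congr (_, _).
  by apply/ffunP => i; rewrite !ffunE permE /Gd_shift h_Xd_at orbit_offset_Xd_at; apply: val_inj.
by apply/permP => i; rewrite permM !permE /Gd_perm_fun h_Xd_at orbit_index_Xd_at.
Qed.

Lemma wreath_coord_inj : injective wreath_coord.
Proof.
move=> f g [/ffunP eq_shift /permP eq_perm]; apply: sval_inj.
apply: functional_extensionality => y; rewrite -(Xd_at_coord y) !Gd_Xd_at.
have := eq_shift (orbit_index y); have := eq_perm (orbit_index y).
by rewrite !ffunE !permE => -> ->.
Qed.

Lemma frobv_coord j (x y : Xd iota n d) : sval y = frobv j (sval x) ->
  orbit_index y = orbit_index x /\ orbit_offset y = inZp (j + orbit_offset x).
Proof.
move=> y_x; have -> : y = Xd_at (orbit_index x) (j + orbit_offset x).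
  by apply: sval_inj; rewrite y_x -{1}(Xd_at_coord x) /= frobvD.
by rewrite orbit_index_Xd_at orbit_offset_Xd_at.
Qed.

Section WreathElement.
Variables (a : {ffun 'I_r -> Zmod d}) (p : {perm 'I_r}).

Definition wreath_fun (y : Xd iota n d) : Xd iota n d :=
  Xd_at (p (orbit_index y)) (orbit_offset y + a (orbit_index y)).

Definition wreath_fun_inv (y : Xd iota n d) : Xd iota n d :=
  Xd_at (p^-1%g (orbit_index y)) (val (orbit_offset y - a (p^-1%g (orbit_index y)))%R).

Lemma wreath_fun_isGd : bijective wreath_fun /\
  forall g, isGal iota g -> forall x y : Xd iota n d,
    sval y = Defs.gact g (sval x) -> sval (wreath_fun y) = Defs.gact g (sval (wreath_fun x)).
Proof.
have Zp_addE (u v : 'I_d) : inZp (u + v) = (u + v)%R by exact: val_inj.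
have Xd_at_addZp i (u v : 'I_d) : Xd_at i (u + v) = Xd_at i (u + v)%R by exact: Xd_at_mod.
split.
  exists wreath_fun_inv => y; rewrite /wreath_fun_inv /wreath_fun.
    by rewrite orbit_index_Xd_at orbit_offset_Xd_at permK Zp_addE addrK Xd_at_coord.
  by rewrite orbit_index_Xd_at orbit_offset_Xd_at permKV valZpK Xd_at_addZp subrK Xd_at_coord.
move=> g g_gal x y; have [j gj] := gal_eq_frobv_on_fixed g_gal (isT : (0 < d)%N).
rewrite !gj ?frobv_Xd // => /frobv_coord[index_y offset_y].
rewrite /wreath_fun index_y offset_y /=.
by rewrite -frobvD [LHS]frobv_mod [RHS]frobv_mod period_nth_rep modnDml addnA.
Qed.

Definition wreath_elt : Gd iota n d := exist _ wreath_fun wreath_fun_isGd.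

Lemma wreath_coord_elt : wreath_coord wreath_elt = (a, p).
Proof.
have elt_Xd_at i : sval wreath_elt (Xd_at i 0) = Xd_at (p i) (a i).
  by rewrite /= /wreath_fun orbit_index_Xd_at orbit_offset_Xd_at.
congr (_, _).
  by apply/ffunP => i; rewrite ffunE /Gd_shift elt_Xd_at orbit_offset_Xd_at valZpK.
by apply/permP => i; rewrite permE /Gd_perm_fun elt_Xd_at orbit_index_Xd_at.
Qed.

End WreathElement.

Lemma wreath_coord_bij : bijective wreath_coord.
Proof.
have eltK : cancel (fun u => wreath_elt u.1 u.2) wreath_coord.
  by case=> a p; exact: wreath_coord_elt.
by exists (fun u => wreath_elt u.1 u.2); first exact: inj_can_sym eltK wreath_coord_inj.
Qed.

Lemma has_card_Xd : has_card (inX iota n d) (r * d).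
Proof.
exists [seq sval (Xd_at q.1 q.2) | q : 'I_r * 'I_d]; split.
  by rewrite size_map -cardE card_prod !card_ord.
split=> [|x].
  rewrite map_inj_uniq ?enum_uniq // => [[i k] [i' k']] /= eq_val.
  have eq_at : Xd_at i k = Xd_at i' k' by exact: sval_inj.
  have := congr1 orbit_index eq_at; have := congr1 orbit_offset eq_at.
  by rewrite !orbit_index_Xd_at !orbit_offset_Xd_at !valZpK => -> ->.
split=> [x_d|/mapP[q _ ->]]; last exact: svalP.
apply/mapP; exists (orbit_index (exist _ x x_d), orbit_offset (exist _ x x_d)).
  by rewrite mem_enum.
by rewrite Xd_at_coord.
Qed.

End WreathCoordinates.

End Frobenius.

Lemma wreath_mul_sdp (A : zmodType) (r : nat) : @wreath_mul A r =2 @sdp_mul A r (@hperm A r).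
Proof. by move=> u v; congr (_, _); apply/ffunP => i; rewrite !ffunE. Qed.


Theorem mainTheorem9 (F : finFieldType) (K : closedFieldType)
  (iota : {rmorphism F -> K})
  (algK : forall x : K, exists p : {poly F}, p != 0 /\ root (map_poly iota p) x)
  (n : nat) :
  (* (1) M is the product of the G_d, via restriction to the X_d *)
  (exists Phi : Mperm iota n -> (forall d : nat, Gd iota n d),
      bijective Phi
      /\ (forall s d (x : Xd iota n d), sval (sval (Phi s d) x) = sval s (sval x))
      /\ (forall s t u : Mperm iota n, (forall x, sval u x = sval t (sval s x)) ->
            forall d, Gd_comp (Phi s d) (Phi t d) (Phi u d)))
  /\
  (* (2),(3): #X_d = N, r_d = N / d *)
  (forall d : nat, (0 < d)%N ->
     exists N : nat, has_card (inX iota n d) N /\ (d %| N)%N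
     /\ (exists Psi : Gd iota n d -> {ffun 'I_(N %/ d) -> Zmod d} * {perm 'I_(N %/ d)},
           is_iso (@Gd_comp F K iota n d) (@wreath_mul _ (N %/ d)) Psi)
     /\ (exists Psi : Gd iota n d -> {ffun 'I_(N %/ d) -> Zmod d} * {perm 'I_(N %/ d)},
           is_iso (@Gd_comp F K iota n d) (@sdp_mul _ (N %/ d) (@hperm _ (N %/ d))) Psi)).
Proof.
split.
  exists (restrM algK (n:=n)); split; first exact: restrM_bij.
  by split=> [//|s t u stu d x]; apply: sval_inj; exact: stu.
case=> [//|d'] _; have [E E_fixed] := frobv_fixed_finite F K n (isT : (0 < d'.+1)%N).
exists (r algK d' E * d'.+1)%N; rewrite mulnK //; split; first exact: has_card_Xd.
split; first exact: dvdn_mull.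
split; exists (wreath_coord algK E_fixed).
  split; [exact: wreath_coord_bij | exact: wreath_coord_mul].
split; first exact: wreath_coord_bij.
by move=> f g h fgh; rewrite -wreath_mul_sdp; exact: wreath_coord_mul.
Qed.
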